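(* Let $f:2^V\to\mathbb{R}_+$ be nonnegative, normalized ($f(\emptyset)=0$), supermodular and monotone, and let $r,k$ be integers with $1\le r\le k\le n-1$. Run batch-greedy augmenting: $T_0=\emptyset$, $t=\lfloor k/r\rfloor$; for $i=1,\dots,t$, let $\mathcal{R}_i$ be the set of $r$-element subsets of $V\setminus T_{i-1}$, choose $S_i\in\arg\max_{S\in\mathcal{R}_i}f(T_{i-1}\cup S)$ and set $T_i=T_{i-1}\cup S_i$. Then for any $t$ pairwise disjoint $r$-element subsets $U_1,\dots,U_t$ of $V$, $f(T_t)\ge\frac12\sum_{h=1}^t f(U_h)$.
   Context: $V$ is a finite set with $n=|V|$. Supermodular: $f(A)+f(B)\le f(A\cup B)+f(A\cap B)$; monotone: $f(B)\le f(A)$ for $B\subseteq A$. *)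

From HB Require Import structures.
From mathcomp Require Import all_boot all_order all_algebra.
Set Implicit Arguments. Unset Strict Implicit. Unset Printing Implicit Defensive.
Import Order.TTheory GRing.Theory Num.Theory.
Local Open Scope ring_scope.

Definition supermodular (R : realFieldType) (V : finType) (f : {set V} -> R) :=
  forall A B : {set V}, f A + f B <= f (A :|: B) + f (A :&: B).

Definition monotone (R : realFieldType) (V : finType) (f : {set V} -> R) :=
  forall A B : {set V}, B \subset A -> f B <= f A.

Definition batch_greedy_run (R : realFieldType) (V : finType)
    (f : {set V} -> R) (r t : nat) (T : nat -> {set V}) :=
  T 0%N = set0 /\
  forall i : nat, (1 <= i <= t)%N ->
    exists S : {set V},
      [/\ S \subset ~: T i.-1, #|S| = r, T i = T i.-1 :|: S &
          forall S' : {set V}, S' \subset ~: T i.-1 -> #|S'| = r ->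
            f (T i.-1 :|: S') <= f (T i.-1 :|: S)].

From HB Require Import structures.
From mathcomp Require Import all_boot all_order all_algebra.
From mathcomp Require Import lra zify.
Import Order.TTheory GRing.Theory Num.Theory.
Local Open Scope ring_scope.

(* In round i, U_i minus T_(i-1) can be padded to a feasible batch, so by
   greedy choice, monotonicity and supermodularity
   f T_i - f T_(i-1) >= f U_i - f (T_(i-1) :&: U_i) >= f U_i - f (T_t :&: U_i).
   Summing telescopes to f T_t >= sum f U_i - sum f (T_t :&: U_i), and the
   last sum is at most f T_t because the sets T_t :&: U_i are disjoint
   subsets of T_t and f is superadditive on disjoint sets. *)

Lemma exists_card_between (T : finType) (A B : {set T}) (n : nat) :
  A \subset B -> (#|A| <= n <= #|B|)%N ->
  exists C : {set T}, [/\ A \subset C, C \subset B & #|C| = n].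
Proof.
move=> sAB /andP[leAn lenB].
have /card_geqP[s [s_uniq s_size sBA]] : (n - #|A| <= #|B :\: A|)%N.
  by rewrite cardsDS //; lia.
have disj : [disjoint A & [set x in s]].
  rewrite disjoint_sym disjoints_subset; apply/subsetP => x.
  by rewrite inE => /sBA; rewrite !inE => /andP[].
exists (A :|: [set x in s]); split; first exact: subsetUl.
  rewrite subUset sAB; apply/subsetP => x; rewrite inE => /sBA.
  by rewrite inE => /andP[].
rewrite cardsU (disjoint_setI0 disj) cards0 subn0.
by rewrite cardsE (card_uniqP s_uniq) s_size; lia.
Qed.

Section Supermodular.

Local Set Implicit Arguments.
Local Unset Strict Implicit.

Variables (R : realFieldType) (V : finType) (f : {set V} -> R).
Hypotheses (f0 : f set0 = 0) (f_super : supermodular f).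

Lemma supermodular_disjointU (A B : {set V}) :
  [disjoint A & B] -> f A + f B <= f (A :|: B).
Proof. by move=> /disjoint_setI0 AB0; have := f_super A B; rewrite AB0 f0 addr0. Qed.

Lemma sum_le_supermodular_bigcup (I : eqType) (s : seq I) (X : I -> {set V}) :
  uniq s -> {in s &, forall i j, i != j -> [disjoint X i & X j]} ->
  \sum_(i <- s) f (X i) <= f (\bigcup_(i <- s) X i).
Proof.
elim: s => [|a s IHs] /=; first by rewrite !big_nil f0.
case/andP => a_notin_s s_uniq disjX; rewrite !big_cons.
have disj_a_s : [disjoint X a & \bigcup_(i <- s) X i].
  rewrite -setI_eq0 big_distrr /= big_seq big1 // => i i_s.
  apply/eqP; rewrite setI_eq0 disjX ?mem_head ?in_cons ?i_s ?orbT //.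
  by apply: contraNneq a_notin_s => ->.
apply: le_trans _ (supermodular_disjointU disj_a_s); rewrite lerD2l.
apply: IHs => // i j i_s j_s; apply: disjX; rewrite in_cons ?i_s ?j_s orbT //.
Qed.

End Supermodular.

Section BatchGreedy.

Local Set Implicit Arguments.
Local Unset Strict Implicit.

Variables (R : realFieldType) (V : finType) (f : {set V} -> R) (r t : nat).
Variable T : nat -> {set V}.
Hypothesis run : batch_greedy_run f r t T.

Lemma batch_greedy_step i : (i < t)%N ->
  exists S : {set V},
    [/\ S \subset ~: T i, #|S| = r, T i.+1 = T i :|: S &
        forall S' : {set V}, S' \subset ~: T i -> #|S'| = r ->
          f (T i :|: S') <= f (T i :|: S)].
Proof. by move=> lt_it; have [_ /(_ i.+1)] := run; apply. Qed.

Lemma card_batch_greedy i : (i <= t)%N -> (#|T i| <= i * r)%N.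
Proof.
elim: i => [|i IHi] le_it; first by have [-> _] := run; rewrite cards0.
have [S [_ cardS -> _]] := batch_greedy_step le_it.
have := IHi (ltnW le_it); rewrite cardsU cardS mulSn; lia.
Qed.

Lemma batch_greedy_subset i j : (i <= j <= t)%N -> T i \subset T j.
Proof.
case/andP => le_ij le_jt.
apply: (@homo_leq_in _ [pred n | n <= t]%N T (fun A B => A \subset B)) => //.
- by move=> B A C; apply: subset_trans.
- by move=> a b _; rewrite !inE => le_bt c /andP[_ /ltnW le_cb]; apply: leq_trans le_bt.
- by move=> n _; rewrite inE => /batch_greedy_step[S [_ _ -> _]]; apply: subsetUl.
- by rewrite inE (leq_trans le_ij).
Qed.

Hypotheses (f_super : supermodular f) (f_mono : monotone f).
Hypothesis room : (t * r <= #|V|)%N.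

Lemma batch_greedy_gain i (U : {set V}) : (i < t)%N -> (#|U| <= r)%N ->
  f U - f (T i :&: U) <= f (T i.+1) - f (T i).
Proof.
move=> lt_it cardU; have [S [_ _ -> S_max]] := batch_greedy_step lt_it.
have [C [sUC sC cardC]] :
    exists C : {set V}, [/\ U :\: T i \subset C, C \subset ~: T i & #|C| = r].
  apply: exists_card_between; first by rewrite setDE subsetIr.
  have := card_batch_greedy (ltnW lt_it); have := cardsC (T i).
  have : (i.+1 * r <= t * r)%N by rewrite leq_mul2r lt_it orbT.
  have := subset_leq_card (subsetDl U (T i)); lia.
have le_UC : f (T i :|: U) <= f (T i :|: C).
  apply: f_mono; apply/subsetP => x; rewrite !inE.
  case: (boolP (x \in T i)) => //= x_notin_Ti x_U.
  by apply: (subsetP sUC); rewrite !inE x_notin_Ti.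
have := f_super (T i) U; have := S_max C sC cardC; lra.
Qed.

Lemma batch_greedy_sum_gain (U : 'I_t -> {set V}) :
  (forall h, #|U h| <= r)%N ->
  \sum_(h < t) (f (U h) - f (T t :&: U h)) <= f (T t) - f (T 0%N).
Proof.
move=> cardU; rewrite -(telescope_sumr (fun i => f (T i)) (leq0n t)) big_mkord.
apply: ler_sum => h _; apply: le_trans _ (batch_greedy_gain (ltn_ord h) (cardU h)).
rewrite lerB // f_mono // setSI // batch_greedy_subset //.
by rewrite leqnn andbT ltnW ?ltn_ord.
Qed.

End BatchGreedy.

Theorem lemma2 (R : realFieldType) (V : finType) (f : {set V} -> R)
    (r k : nat) (T : nat -> {set V}) (U : 'I_(k %/ r) -> {set V}) :
  (forall A, 0 <= f A) ->
  f set0 = 0 ->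
  supermodular f ->
  monotone f ->
  (1 <= r)%N -> (r <= k)%N -> (k <= #|V|.-1)%N ->
  batch_greedy_run f r (k %/ r) T ->
  (forall h, #|U h| = r) ->
  (forall h1 h2, h1 != h2 -> [disjoint U h1 & U h2]) ->
  f (T (k %/ r)%N) >= 2^-1 * \sum_(h < k %/ r) f (U h).
Proof.
move=> _ f0 f_super f_mono _ _ le_kV run cardU disjU.
set t := (k %/ r)%N in U run cardU disjU *.
have room : (t * r <= #|V|)%N.
  by apply: leq_trans (leq_trunc_div k r) _; apply: leq_trans le_kV (leq_pred _).
have gain := batch_greedy_sum_gain run f_super f_mono room (fun h => eq_leq (cardU h)).
have [T0 _] := run; rewrite T0 f0 subr0 sumrB in gain.
have disjTU : forall h1 h2, h1 != h2 -> [disjoint T t :&: U h1 & T t :&: U h2].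
  move=> h1 h2 /disjU; rewrite -!setI_eq0 => /eqP U12.
  by rewrite setIACA U12 setI0.
have lost : \sum_(h < t) f (T t :&: U h) <= f (T t).
  apply: le_trans (sum_le_supermodular_bigcup f0 f_super (index_enum_uniq _)
                     (in2W disjTU)) _.
  by apply: f_mono; apply/bigcupsP => h _; apply: subsetIl.
lra.
Qed.
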